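(* The ladder chain $L(2,2,\sqrt2-1)$ is recurrent; that is, if $\mathbf{S}=(S_n:n\ge1)\sim L(2,2,\sqrt2-1)$ then $\mathbb{P}(S_n\neq 0\text{ for all }n\ge1)=0$.
   Context: Ladder chain: let $\xi_1,\xi_2,\dots$ be i.i.d. with values in $\{1,-1\}$, $\mathbb{P}(\xi_i=1)=p$, $\mathbb{P}(\xi_i=-1)=1-p$, and let $r,s$ be positive integers. Define $X_k=-1$ if $\xi_k=-1$; $X_k=s$ if $k\ge r$ and $\xi_k=\xi_{k-1}=\dots=\xi_{k-r+1}=1$; and $X_k=1$ otherwise. Let $S_n=X_1+\dots+X_n$. The process $\mathbf{S}=(S_n:n\ge1)$ is a ladder chain of order $r$, step $s$, probability $p$, written $\mathbf{S}\sim L(r,s,p)$. A ladder chain is transient if $\mathbb{P}(S_n\neq0\text{ for all }n\ge1)>0$, and recurrent otherwise. *)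

From HB Require Import structures.
From mathcomp Require Import all_boot all_order all_algebra.
From mathcomp Require Import all_classical all_reals all_analysis.
Set Implicit Arguments. Unset Strict Implicit. Unset Printing Implicit Defensive.
Import Order.TTheory GRing.Theory Num.Theory.
Local Open Scope classical_set_scope.
Local Open Scope ring_scope.

Definition mutually_independent d (T : measurableType d) (R : realType)
  (P : probability T R) (xi : nat -> T -> R) : Prop :=
  forall (I : seq nat) (B : nat -> set R), uniq I ->
    (forall i, i \in I -> measurable (B i)) ->
    P (\bigcap_(i in [set` I]) (xi i @^-1` B i)) =
    (\big[*%E/1%E]_(i <- I) P (xi i @^-1` B i))%E.

(* The coin sequence is 0-based:
   e j stands for xi_{j+1}.  ladder_X r s e k stands for X_{k+1}:
   X_{k+1} = -1 if xi_{k+1} = -1;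
           = s  if k+1 >= r and xi_{k+1} = ... = xi_{k-r+2} = 1;
           = 1  otherwise. *)
Definition ladder_X (R : realType) (r s : nat) (e : nat -> R) (k : nat) : R :=
  if e k == -1 then -1
  else if (r <= k.+1)%N && [forall j : 'I_r, e (k - j)%N == 1] then s%:R
  else 1.

Definition ladder_S (R : realType) (r s : nat) (e : nat -> R) (n : nat) : R :=
  \sum_(k < n) ladder_X r s e k.

From HB Require Import structures.
From mathcomp Require Import all_boot all_order all_algebra.
From mathcomp Require Import all_classical all_reals all_analysis.
From mathcomp Require Import zify ring lra.
Import Order.TTheory GRing.Theory Num.Theory.
Local Open Scope classical_set_scope.
Local Open Scope ring_scope.
Set Implicit Arguments. Unset Strict Implicit. Unset Printing Implicit Defensive.

(* Record, besides S_n, whether the last coin was heads; this makes the ladder chain a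
   Markov chain on int * bool, and for p = sqrt 2 - 1 the function M(h, q) = h + p [q] is a
   martingale for it with bounded increments, while M^2 has drift at least 1.  From (1, heads),
   optional stopping for M at the exit of (0, K) bounds the probability of climbing to K
   before returning to 0 by O(1/K), and optional stopping for M^2 bounds the probability of
   staying in (0, K) for K (K + 2)^2 steps by 1/K; the negative side is the same with
   1 + p - M, and the walk can only cross 0 upwards by landing at (1, heads).  Hence the
   probability of avoiding 0 during 2 K (K + 2)^2 + 1 steps is O(1/K), and it vanishes. *)

Section BitExpectation.
Variables (R : numDomainType) (p : R).

Fixpoint Ebits (N : nat) (F : seq bool -> R) : R :=
  if N is N'.+1 then
    p * Ebits N' (fun s => F (true :: s)) + (1 - p) * Ebits N' (fun s => F (false :: s))
  else F [::].

Definition Pbits (N : nat) (A : pred (seq bool)) : R := Ebits N (fun s => (A s)%:R).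

Lemma eq_Ebits N F G : F =1 G -> Ebits N F = Ebits N G.
Proof. by move=> FG; congr Ebits; apply: funext. Qed.

Lemma Ebits_const N c : Ebits N (fun=> c) = c.
Proof. by elim: N => //= N ->; ring. Qed.

Lemma EbitsD N F G : Ebits N (fun s => F s + G s) = Ebits N F + Ebits N G.
Proof. by elim: N F G => //= N IH F G; rewrite !IH; ring. Qed.

Lemma EbitsZ N c F : Ebits N (fun s => c * F s) = c * Ebits N F.
Proof. by elim: N F => //= N IH F; rewrite !IH; ring. Qed.

Hypotheses (p_ge0 : 0 <= p) (p_le1 : p <= 1).

Lemma ler_Ebits N F G :
  (forall s, size s = N -> F s <= G s) -> Ebits N F <= Ebits N G.
Proof.
elim: N F G => [|N IH] F G FG /=; first exact: FG.
have p'_ge0 : 0 <= 1 - p by rewrite subr_ge0.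
by apply: lerD; apply: ler_wpM2l => //; apply: IH => s sz; apply: FG; rewrite /= sz.
Qed.

Lemma Pbits_ge0 N A : 0 <= Pbits N A.
Proof. by rewrite -(Ebits_const N 0); apply: ler_Ebits => s _; rewrite ler0n. Qed.

Lemma Pbits_le1 N A : Pbits N A <= 1.
Proof. by rewrite -(Ebits_const N 1); apply: ler_Ebits => s _; rewrite lern1 leq_b1. Qed.

Lemma Pbits_andl N (b : bool) A : Pbits N (fun s => b && A s) = b%:R * Pbits N A.
Proof. by case: b; rewrite ?mul1r ?mul0r //; apply: Ebits_const. Qed.

End BitExpectation.

Section RandomWalk.
Variables (R : numDomainType) (p : R) (S : Type) (step : S -> bool -> S).

Definition drift (g : S -> R) (x : S) : R :=
  p * g (step x true) + (1 - p) * g (step x false) - g x.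

Fixpoint stopped (D : pred S) (x : S) (s : seq bool) : S :=
  if s is c :: s' then (if D x then stopped D (step x c) s' else x) else x.

Fixpoint stopped_sum (D : pred S) (f : S -> R) (x : S) (s : seq bool) : R :=
  if s is c :: s' then (if D x then f x + stopped_sum D f (step x c) s' else 0) else 0.

Lemma Ebits_stopped D g N x :
  Ebits p N (fun s => g (stopped D x s)) = g x + Ebits p N (stopped_sum D (drift g) x).
Proof.
elim: N x => [|N IH] x /=; first by rewrite addr0.
case: (D x); last by rewrite !Ebits_const; ring.
by rewrite !IH !EbitsD !Ebits_const /drift; ring.
Qed.

Lemma stopped_sum_eq0 (D : pred S) f x s :
  {in D, f =1 fun=> 0} -> stopped_sum D f x s = 0.
Proof.
move=> f0; elim: s x => [|c s IH] x //=.
by case Dx: (D x) => //; rewrite f0 ?IH ?add0r.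
Qed.

Lemma stopped_sum_ge0 (D : pred S) f x s :
  {in D, forall y, 0 <= f y} -> 0 <= stopped_sum D f x s.
Proof.
move=> f_ge0; elim: s x => [|c s IH] x //=.
by case Dx: (D x) => //; rewrite addr_ge0 ?f_ge0.
Qed.

Lemma stopped_sum_ge_size (D : pred S) f x s : {in D, forall y, 1 <= f y} ->
  D (stopped D x s) -> (size s)%:R <= stopped_sum D f x s.
Proof.
move=> f_ge1; elim: s x => [|c s IH] x //=.
case Dx: (D x) => Dstop; last by rewrite Dx in Dstop.
by rewrite -addn1 natrD addrC lerD ?f_ge1 ?IH.
Qed.

Lemma stopped_inv (D I : pred S) x s :
  (forall y c, D y -> I y -> I (step y c)) -> I x -> I (stopped D x s).
Proof.
move=> Istep; elim: s x => [|c s IH] x //= Ix.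
by case Dx: (D x) => //; apply/IH/Istep.
Qed.

Lemma stopped_all (D A : pred S) x s :
  A x -> all A (scanl step x s) -> A (stopped D x s).
Proof.
elim: s x => [|c s IH] x //= Ax /andP[Ay As].
by case: (D x) => //; apply: IH.
Qed.

Lemma Pbits_all_scanlS A x N :
  Pbits p N.+1 (fun s => all A (scanl step x s)) =
    p * ((A (step x true))%:R *
      Pbits p N (fun s => all A (scanl step (step x true) s))) +
    (1 - p) * ((A (step x false))%:R *
      Pbits p N (fun s => all A (scanl step (step x false) s))).
Proof. by rewrite -!Pbits_andl. Qed.

Section PathEvents.
Hypotheses (p_ge0 : 0 <= p) (p_le1 : p <= 1).

Lemma Pbits_all_scanl_mono A x n N : (n <= N)%N ->
  Pbits p N (fun s => all A (scanl step x s)) <= Pbits p n (fun s => all A (scanl step x s)).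
Proof.
have mono1 x' k : Pbits p k.+1 (fun s => all A (scanl step x' s)) <=
    Pbits p k (fun s => all A (scanl step x' s)).
  elim: k x' => [|k IH] x'; first exact: Pbits_le1.
  rewrite Pbits_all_scanlS [leRHS]Pbits_all_scanlS.
  by apply: lerD; apply: ler_wpM2l; rewrite ?subr_ge0 ?ler_wpM2l ?ler0n.
move=> /subnK <-; elim: (N - n)%N => // k IH.
by rewrite addSn; apply: le_trans IH.
Qed.

Lemma Pbits_all_scanl_split (A B : pred S) z x m N :
  (forall y c, A y -> [\/ A (step y c), ~~ B (step y c) | step y c = z]) ->
  A x -> (m <= N)%N ->
  Pbits p N (fun s => all B (scanl step x s)) <=
    Pbits p m (fun s => all A (scanl step x s)) +
    Pbits p (N - m) (fun s => all B (scanl step z s)).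
Proof.
move=> A_step; elim: m N x => [|m IH] N x Ax le_mN.
  rewrite subn0 -[X in X <= _]addr0 lerD ?Pbits_ge0 //.
  exact: Pbits_le1.
case: N le_mN => // N le_mN; rewrite !Pbits_all_scanlS subSS.
set E := Pbits p (N - m) _.
have E_ge0 : 0 <= E by apply: Pbits_ge0.
have branch c :
    (B (step x c))%:R * Pbits p N (fun s => all B (scanl step (step x c) s)) <=
    (A (step x c))%:R * Pbits p m (fun s => all A (scanl step (step x c) s)) + E.
  have ind_le1 (b : bool) : b%:R <= 1 :> R by rewrite lern1 leq_b1.
  case: (A_step x c Ax) => [Ay | nBy | ->].
  - rewrite Ay mul1r; apply: le_trans _ (IH _ _ Ay le_mN).
    by rewrite ler_piMl ?Pbits_ge0.
  - by rewrite (negbTE nBy) mul0r addr_ge0 ?mulr_ge0 ?Pbits_ge0.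
  - apply: le_trans (ler_piMl (Pbits_ge0 p_ge0 p_le1 _ _) (ind_le1 _)) _.
    apply: le_trans (Pbits_all_scanl_mono _ _ (leq_subr m N)) _.
    by rewrite lerDr mulr_ge0 ?Pbits_ge0.
have p'_ge0 : 0 <= 1 - p by rewrite subr_ge0.
apply: le_trans (lerD (ler_wpM2l p_ge0 (branch true)) (ler_wpM2l p'_ge0 (branch false))) _.
by rewrite le_eqVlt; apply/orP; left; apply/eqP; ring.
Qed.

End PathEvents.
End RandomWalk.

Section ExitBound.
Variables (R : realFieldType) (p : R) (S : Type) (step : S -> bool -> S).
Variables (D A I : pred S) (W V : S -> R) (K C : R).
Hypotheses (p_ge0 : 0 <= p) (p_le1 : p <= 1) (K_gt0 : 0 < K).
Hypothesis I_step : forall y c, D y -> I y -> I (step y c).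
Hypotheses (W_mart : {in D, forall y, drift p step W y = 0})
  (V_drift : {in D, forall y, 1 <= drift p step V y}).
Hypotheses (W_ge0 : {in I, forall y, 0 <= W y})
  (W_exit : forall y, I y -> A y -> ~~ D y -> K <= W y)
  (V_ge0 : {in I, forall y, 0 <= V y}) (V_le : {in I, forall y, V y <= C}).

(* Staying in [A] means either exiting [D], where [W >= K], or lingering in [D] for all of
   [s], so that the drifts of [V] add up to at least [size s]. *)
Lemma stay_indicator_le x s : I x -> A x -> (0 < size s)%N ->
  (all A (scanl step x s))%:R <=
    K^-1 * W (stopped step D x s) +
    (size s)%:R^-1 * stopped_sum step D (drift p step V) x s.
Proof.
move=> Ix Ax s_gt0; have Istop := stopped_inv s I_step Ix.
have W_term : 0 <= K^-1 * W (stopped step D x s).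
  by rewrite mulr_ge0 ?invr_ge0 ?(ltW K_gt0) ?W_ge0.
have V_term : 0 <= (size s)%:R^-1 * stopped_sum step D (drift p step V) x s.
  rewrite mulr_ge0 ?invr_ge0 ?ler0n ?stopped_sum_ge0 // => y /V_drift; exact: le_trans.
case allA: (all A _); last by rewrite addr_ge0.
have Astop := stopped_all D Ax allA.
rewrite /= mulr1n; case Dstop: (D (stopped step D x s)).
- have V_ge1 : 1 <= (size s)%:R^-1 * stopped_sum step D (drift p step V) x s.
    by rewrite ler_pdivlMl ?ltr0n // mulr1 stopped_sum_ge_size.
  by apply: le_trans V_ge1 _; rewrite lerDr.
- have W_ge1 : 1 <= K^-1 * W (stopped step D x s).
    by rewrite ler_pdivlMl // mulr1 W_exit ?Dstop.
  by apply: le_trans W_ge1 _; rewrite lerDl.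
Qed.

Lemma Pbits_stay_le x L : I x -> A x -> (0 < L)%N ->
  Pbits p L (fun s => all A (scanl step x s)) <= W x / K + C / L%:R.
Proof.
move=> Ix Ax L_gt0.
apply: le_trans (@ler_Ebits _ _ p_ge0 p_le1 L _ (fun s =>
  K^-1 * W (stopped step D x s) + L%:R^-1 * stopped_sum step D (drift p step V) x s) _) _.
  by move=> s sz; rewrite -sz stay_indicator_le ?sz.
have W_opt : Ebits p L (fun s => W (stopped step D x s)) = W x.
  rewrite Ebits_stopped -[RHS]addr0 -(Ebits_const p L 0); congr (_ + _).
  by apply: eq_Ebits => s; apply: stopped_sum_eq0.
have V_opt : Ebits p L (stopped_sum step D (drift p step V) x) <= C.
  have V_stop : Ebits p L (fun s => V (stopped step D x s)) <= C.
    rewrite -(Ebits_const p L C); apply: ler_Ebits => // s _.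
    by apply: V_le; apply: stopped_inv I_step Ix.
  have := V_ge0 Ix; rewrite Ebits_stopped in V_stop; lra.
rewrite EbitsD !EbitsZ W_opt mulrC lerD // mulrC ler_wpM2r ?invr_ge0 ?ler0n //.
Qed.

End ExitBound.

Section LadderWalk.
Variables (R : archiRealFieldType) (p : R).
Hypotheses (p_gt0 : 0 < p) (p_eq : p ^+ 2 + 2 * p = 1).

(* The state is (S_n, whether coin n was heads): for order 2 and step 2, a head climbs 2
   exactly when the previous coin was also heads. *)
Definition ladder_step (x : int * bool) (c : bool) : int * bool :=
  (if c then x.1 + (if x.2 then 2 else 1) else x.1 - 1, c).

(* A martingale exactly when p^2 + 2 p = 1: this is where p = sqrt 2 - 1 comes from. *)
Definition ladder_mart (x : int * bool) : R := x.1%:~R + (if x.2 then p else 0).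

Let p_lt1 : p < 1. Proof. by move: p_gt0 p_eq; nra. Qed.
Let p_ge0 : 0 <= p. Proof. exact: ltW. Qed.
Let p_le1 : p <= 1. Proof. exact: ltW. Qed.

Lemma drift_ladder_mart x : drift p ladder_step ladder_mart x = 0.
Proof.
case: x => h q; rewrite /drift /ladder_mart /=.
by move: p_gt0 p_eq; case: q; rewrite ?intrD ?intrB /=; set y := h%:~R; nra.
Qed.

Lemma drift_ladder_mart_sq x :
  1 <= drift p ladder_step (fun y => ladder_mart y ^+ 2) x.
Proof.
case: x => h q; rewrite /drift /ladder_mart /=; set y := h%:~R.
have cross : (p ^+ 2 + 2 * p - 1) * y = 0 by rewrite p_eq subrr mul0r.
by move: p_gt0 p_lt1 cross; case: q; rewrite ?intrD ?intrB /= -/y; nra.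
Qed.

Let ladder_mart_sq_le (K : nat) x : (- K%:Z <= x.1) && (x.1 <= K%:Z + 1) ->
  ladder_mart x ^+ 2 <= (K%:R + 2) ^+ 2.
Proof.
case: x => h q /andP[/= lo hi]; rewrite /ladder_mart /=.
have lo' : - K%:R <= h%:~R :> R by rewrite -[K%:R]/((K%:Z)%:~R) -intrN ler_int.
have hi' : h%:~R <= K%:R + 1 :> R by move: hi; rewrite -(ler_int R) intrD.
by move: p_gt0 p_lt1; case: q; nra.
Qed.

Definition ladder_horizon (K : nat) : nat := K * (K + 2) ^ 2.

Let ladder_horizon_gt0 K : (0 < K)%N -> (0 < ladder_horizon K)%N.
Proof. by move=> K_gt0; rewrite muln_gt0 K_gt0 expn_gt0 addn2. Qed.

Let ladder_horizon_ratio (K : nat) : (0 < K)%N ->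
  (K%:R + 2) ^+ 2 / (ladder_horizon K)%:R = K%:R^-1 :> R.
Proof.
move=> K_gt0; have Kr_gt0 : 0 < K%:R :> R by rewrite ltr0n.
rewrite natrM natrX natrD; field.
by apply/andP; split; apply/eqP; lra.
Qed.

Lemma Pbits_ladder_pos (K : nat) : (0 < K)%N ->
  Pbits p (ladder_horizon K)
    (fun s => all (fun y => 0 < y.1) (scanl ladder_step (1, true) s)) <= 3 / K%:R.
Proof.
move=> K_gt0; have Kr_gt0 : 0 < K%:R :> R by rewrite ltr0n.
apply: le_trans (Pbits_stay_le (D := fun y => (0 < y.1) && (y.1 < K%:Z))
  (I := fun y => (0 <= y.1) && (y.1 <= K%:Z + 1)) (W := ladder_mart)
  (V := fun y => ladder_mart y ^+ 2) (C := (K%:R + 2) ^+ 2) p_ge0 p_le1 Kr_gt0 _ _ _ _ _ _ _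
  _ _ _) _ => //.
- by move=> [h q] [] /andP[/= ? ?] /andP[/= ? ?]; case: q; lia.
- by move=> y _; apply: drift_ladder_mart.
- by move=> y _; apply: drift_ladder_mart_sq.
- move=> [h q] /andP[/= h_ge0 _]; rewrite /ladder_mart /= addr_ge0 ?ler0z //.
  by case: q.
- move=> [h q] _ /= h_gt0; rewrite h_gt0 -leNgt => Kh.
  have Kh' : K%:R <= h%:~R :> R by rewrite -[K%:R]/((K%:Z)%:~R) ler_int.
  by move: p_ge0; rewrite /ladder_mart /=; case: q; lra.
- by move=> y _; apply: sqr_ge0.
- by move=> [h q] /andP[/= ? ?]; apply: ladder_mart_sq_le => /=; lia.
- by rewrite /=; lia.
- exact: ladder_horizon_gt0.
rewrite ladder_horizon_ratio // /ladder_mart /= (_ : 1%:~R = 1 :> R) //.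
by rewrite -[X in _ + X]mul1r -mulrDl ler_pM2r ?invr_gt0 //; move: p_le1; lra.
Qed.

Lemma Pbits_ladder_neg (K : nat) : (0 < K)%N ->
  Pbits p (ladder_horizon K)
    (fun s => all (fun y => y.1 < 0) (scanl ladder_step (-1, false) s)) <= 4 / K%:R.
Proof.
move=> K_gt0; have Kr_gt0 : 0 < K%:R :> R by rewrite ltr0n.
apply: le_trans (Pbits_stay_le (D := fun y => (- K%:Z < y.1) && (y.1 < 0))
  (I := fun y => (- K%:Z <= y.1) && (y.1 <= 1)) (W := fun y => 1 + p - ladder_mart y)
  (V := fun y => ladder_mart y ^+ 2) (C := (K%:R + 2) ^+ 2) p_ge0 p_le1 Kr_gt0 _ _ _ _ _ _ _
  _ _ _) _ => //.
- by move=> [h q] [] /andP[/= ? ?] /andP[/= ? ?]; case: q; lia.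
- move=> y _; rewrite -[RHS]oppr0 -(drift_ladder_mart y) /drift; ring.
- by move=> y _; apply: drift_ladder_mart_sq.
- move=> [h q] /andP[/= _ h_le1].
  have h_le1' : h%:~R <= 1 :> R by move: h_le1; rewrite -(ler_int R).
  by move: p_ge0; rewrite /ladder_mart /=; case: q; lra.
- move=> [h q] _ /= h_lt0; rewrite h_lt0 andbT -leNgt => hK.
  have hK' : h%:~R <= - K%:R :> R by move: hK; rewrite -(ler_int R) intrN.
  by move: p_ge0; rewrite /ladder_mart /=; case: q; lra.
- by move=> y _; apply: sqr_ge0.
- by move=> [h q] /andP[/= ? ?]; apply: ladder_mart_sq_le => /=; lia.
- by rewrite /=; lia.
- exact: ladder_horizon_gt0.
rewrite ladder_horizon_ratio // /ladder_mart /= (_ : (-1)%:~R = -1 :> R) //.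
by rewrite -[X in _ + X]mul1r -mulrDl ler_pM2r ?invr_gt0 //; move: p_le1; lra.
Qed.

Lemma ladder_avoid0_pos x s : 0 < x.1 ->
  all (fun y => y.1 != 0) (scanl ladder_step x s) =
  all (fun y => 0 < y.1) (scanl ladder_step x s).
Proof.
elim: s x => [|c s IH] [h q] //= h_gt0.
set y := (if c then _ else _).
have : 0 <= y by rewrite /y; case: (c); case: (q); lia.
rewrite le_eqVlt => /orP[/eqP <- | y_gt0]; first by rewrite eqxx ltxx.
by rewrite y_gt0 (gt_eqF y_gt0) IH.
Qed.

Lemma ladder_step_neg y c : y.1 < 0 ->
  [\/ (ladder_step y c).1 < 0, ~~ ((ladder_step y c).1 != 0) | ladder_step y c = (1, true)].
Proof.
case: y c => h q [] /= h_lt0; last by apply: Or31; lia.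
case: (ltrgtP (h + (if q then 2 else 1)) 0) => [_|up|_]; [by apply: Or31 | | by apply: Or32].
apply: Or33; rewrite /ladder_step /=.
by case: q up => /= up; [congr pair; lia | exfalso; lia].
Qed.

Lemma Pbits_ladder_avoid0 (K : nat) : (0 < K)%N ->
  Pbits p (ladder_horizon K).*2.+1
    (fun s => all (fun y => y.1 != 0) (scanl ladder_step (0, false) s)) <= 7 / K%:R.
Proof.
move=> K_gt0; set L := ladder_horizon K.
have pos : Pbits p L
    (fun s => all (fun y => y.1 != 0) (scanl ladder_step (1, true) s)) <= 3 / K%:R.
  rewrite /Pbits (@eq_Ebits _ p L _
    (fun s => (all (fun y => 0 < y.1) (scanl ladder_step (1, true) s))%:R)).
    exact: Pbits_ladder_pos.
  by move=> s; rewrite ladder_avoid0_pos.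
rewrite Pbits_all_scanlS !mul1r -addnn.
have pos_branch : Pbits p (L + L)
    (fun s => all (fun y => y.1 != 0) (scanl ladder_step (ladder_step (0, false) true) s))
    <= 7 / K%:R.
  apply: le_trans (Pbits_all_scanl_mono ladder_step p_ge0 p_le1 _ _ (leq_addr L L)) _.
  by apply: le_trans pos _; rewrite ler_pM2r ?invr_gt0 ?ltr0n // ler_nat.
have neg_branch : Pbits p (L + L)
    (fun s => all (fun y => y.1 != 0) (scanl ladder_step (ladder_step (0, false) false) s))
    <= 7 / K%:R.
  apply: le_trans (Pbits_all_scanl_split (A := fun y => y.1 < 0) (B := fun y => y.1 != 0)
    p_ge0 p_le1 ladder_step_neg _ (leq_addr L L)) _ => //.
  rewrite addnK; apply: le_trans (lerD (Pbits_ladder_neg K_gt0) pos) _.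
  by rewrite -mulrDl ler_pM2r ?invr_gt0 ?ltr0n //; lra.
have p'_ge0 : 0 <= 1 - p by rewrite subr_ge0.
apply: le_trans (lerD (ler_wpM2l p_ge0 pos_branch) (ler_wpM2l p'_ge0 neg_branch)) _.
by rewrite -mulrDl addrC subrK mul1r.
Qed.

Lemma ladder_avoid0_vanish e : 0 < e -> exists N,
  Pbits p N (fun s => all (fun y => y.1 != 0) (scanl ladder_step (0, false) s)) <= e.
Proof.
move=> e_gt0; set K := (Num.truncn (7 / e)).+1.
exists (ladder_horizon K).*2.+1; apply: le_trans (Pbits_ladder_avoid0 _) _ => //.
rewrite ler_pdivrMr ?ltr0n // mulrC -ler_pdivrMr //.
exact/ltW/truncnS_gt.
Qed.

End LadderWalk.

Definition heads (R : nzRingType) (e : nat -> R) (k n : nat) : seq bool :=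
  mkseq (fun i => e (k + i)%N == 1) n.

Lemma heads_rcons (R : nzRingType) (e : nat -> R) k n :
  heads e k n.+1 = rcons (heads e k n) (e (k + n)%N == 1).
Proof. exact: mkseqS. Qed.

Lemma heads_cons (R : nzRingType) (e : nat -> R) k n :
  heads e k n.+1 = (e k == 1) :: heads e k.+1 n.
Proof.
rewrite /heads /mkseq /= addn0 (iotaDl 1 0) -map_comp.
by congr (_ :: _); apply: eq_map => i /=; rewrite addnA addn1.
Qed.

Lemma measurable_eq1 (R : realType) (c : bool) : measurable [set v : R | (v == 1) = c].
Proof.
have -> : [set v : R | (v == 1) = c] = if c then [set 1] else ~` [set 1].
  by apply/seteqP; split => v /=; case: c; case: eqP.
by case: c => /=; [|apply: measurableC]; apply: measurable_set1.
Qed.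

Section BernoulliHeads.
Variables (R : realType) (d : measure_display) (T : measurableType d).
Variables (P : probability T R) (xi : nat -> T -> R) (p : R).
Hypotheses (xi_meas : forall i, measurable_fun setT (xi i))
  (xi_indep : mutually_independent P xi)
  (xi_p : forall i, P [set t | xi i t = 1] = p%:E).

Let measurable_head i c : measurable [set t | (xi i t == 1) = c].
Proof. by have := xi_meas i measurableT (@measurable_eq1 R c); rewrite setTI. Qed.

Let prob_head i c : P [set t | (xi i t == 1) = c] = (if c then p else 1 - p)%:E.
Proof.
have -> : [set t | (xi i t == 1) = c] =
    if c then [set t | xi i t = 1] else ~` [set t | xi i t = 1].
  by apply/seteqP; split => t /=; case: c; case: eqP.
case: c; rewrite ?probability_setC ?xi_p //.
by have := xi_meas i measurableT (measurable_set1 1); rewrite setTI.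
Qed.

Lemma measurable_heads k n (G : pred (seq bool)) :
  measurable [set t | G (heads (xi^~ t) k n)].
Proof.
elim: n k G => [|n IH] k G.
  case: (G [::]); first by rewrite -[X in measurable X]/[set` predT] set_true.
  by rewrite -[X in measurable X]/[set` pred0] set_false.
have -> : [set t | G (heads (xi^~ t) k n.+1)] =
    [set t | (xi k t == 1) = true] `&` [set t | G (true :: heads (xi^~ t) k.+1 n)] `|`
    [set t | (xi k t == 1) = false] `&` [set t | G (false :: heads (xi^~ t) k.+1 n)].
  apply/seteqP; split => t /=; rewrite heads_cons; case: (xi k t == 1);
    by [left | right | case=> -[]].
apply: measurableU; apply: measurableI => //.
- exact: IH k.+1 (fun s => G (true :: s)).
- exact: IH k.+1 (fun s => G (false :: s)).
Qed.

Lemma prob_heads_prefix k u : size u = k ->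
  P [set t | heads (xi^~ t) 0 k == u] = (\prod_(c <- u) (if c then p else 1 - p))%:E.
Proof.
move=> size_u.
have -> : [set t | heads (xi^~ t) 0 k == u] =
    \bigcap_(i in [set` iota 0 k]) (xi i @^-1` [set v | (v == 1) = nth false u i]).
  apply/seteqP; split => t /=.
    by move=> /eqP <- i; rewrite /= mem_iota => /andP[_ lt_ik]; rewrite nth_mkseq.
  move=> u_t; apply/eqP/(@eq_from_nth _ false); rewrite ?size_mkseq // => i lt_ik.
  by rewrite nth_mkseq // u_t //= mem_iota lt_ik.
rewrite xi_indep ?iota_uniq //; last by move=> i _; apply: measurable_eq1.
rewrite (eq_bigr (fun i => (if nth false u i then p else 1 - p)%:E)); last first.
  by move=> i _; apply: prob_head.
by rewrite prodEFin (big_nth false) size_u /index_iota subn0.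
Qed.

Lemma prob_heads_window N k u (F : pred (seq bool)) : size u = k ->
  P ([set t | heads (xi^~ t) 0 k == u] `&` [set t | F (heads (xi^~ t) k N)]) =
    ((\prod_(c <- u) (if c then p else 1 - p)) * Pbits p N F)%:E.
Proof.
elim: N k u F => [|N IH] k u F size_u.
  rewrite /Pbits /=; case: (F [::]) => /=.
    rewrite -[X in _ `&` X]/[set` predT] set_true setIT prob_heads_prefix //.
    by rewrite mulr1n mulr1.
  by rewrite -[X in _ `&` X]/[set` pred0] set_false setI0 measure0 mulr0n mulr0.
pose A (c : bool) := [set t | heads (xi^~ t) 0 k.+1 == rcons u c] `&`
  [set t | F (c :: heads (xi^~ t) k.+1 N)].
have -> : [set t | heads (xi^~ t) 0 k == u] `&` [set t | F (heads (xi^~ t) k N.+1)] =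
    A true `|` A false.
  apply/seteqP; rewrite /A; split => t /=; rewrite (heads_rcons _ 0 k) (heads_cons _ k N).
    move=> [/eqP -> Fb]; case: (xi k t == 1) Fb => Fb; [left | right]; by rewrite eqxx.
  by case=> -[/eqP/rcons_inj[-> ->] Fc]; rewrite eqxx.
have measurable_A c : measurable (A c).
  apply: measurableI; first exact: measurable_heads 0 k.+1 (pred1 (rcons u c)).
  exact: measurable_heads k.+1 N (fun s => F (c :: s)).
have disjoint_A : A true `&` A false = set0.
  apply/seteqP; split => t //= -[[/eqP e1 _] [/eqP e2 _]].
  by move: e2; rewrite e1 => /rcons_inj.
have IH_A c : P (A c) = ((\prod_(c <- rcons u c) (if c then p else 1 - p)) *
    Pbits p N (fun s => F (c :: s)))%:E.
  by apply: IH; rewrite size_rcons size_u.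
have -> : P (A true `|` A false) = (P (A true) + P (A false))%E by apply: measureU.
rewrite !IH_A -EFinD !big_rcons /=.
by congr EFin; rewrite /Pbits /=; ring.
Qed.

Lemma prob_heads N (F : pred (seq bool)) :
  P [set t | F (heads (xi^~ t) 0 N)] = (Pbits p N F)%:E.
Proof.
have := @prob_heads_window N 0 [::] F erefl; rewrite big_nil mul1r => <-.
by apply: congr1; apply/seteqP; split => t //= -[].
Qed.

End BernoulliHeads.

Lemma all_scanl_headsP (R : nzRingType) (S : Type) (f : S -> bool -> S) (A : pred S) x
    (e : nat -> R) :
  (forall N, all A (scanl f x (heads e 0 N))) <->
  (forall n, (0 < n)%N -> A (foldl f x (heads e 0 n))).
Proof.
split=> [allA [|n] // _ | An N].
  by have := allA n.+1; rewrite heads_rcons scanl_rcons all_rcons -heads_rcons => /andP[].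
elim: N => [|N IH] //.
by rewrite heads_rcons scanl_rcons all_rcons -heads_rcons IH An.
Qed.

Lemma foldl_ladder_step_snd x s : (foldl ladder_step x s).2 = last x.2 s.
Proof. by elim: s x => //= c s IH x; rewrite IH. Qed.

Section LadderIncrements.
Variables (R : realType) (e : nat -> R).
Hypothesis e_pm1 : forall k, e k = 1 \/ e k = -1.

Lemma ladder_X_eq k : ladder_X 2 2 e k =
  if e k == 1 then (if (0 < k)%N && (e k.-1 == 1) then 2 else 1) else -1.
Proof.
have neq_pm1 : (1 : R) != -1 by apply/eqP; lra.
rewrite /ladder_X; case: (e_pm1 k) => ek; rewrite ek eqxx; last by rewrite eq_sym (negbTE neq_pm1).
rewrite (negbTE neq_pm1); case: k ek => // k ek /=.
congr (if _ then _ else _); apply/forallP/idP => [all1 | ek1 j].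
  by have := all1 (Ordinal (isT : (1 < 2)%N)); rewrite /= subSS subn0.
by case: j => -[|[|//]] /= _; rewrite ?subn0 ?ek ?subSS ?subn0.
Qed.

Lemma ladder_S_heads n :
  ladder_S 2 2 e n = (foldl ladder_step (0, false) (heads e 0 n)).1%:~R.
Proof.
elim: n => [|n IH]; first by rewrite /ladder_S big_ord0.
rewrite /ladder_S big_ord_recr -/(ladder_S 2 2 e n) IH heads_rcons foldl_rcons /=.
set x := foldl ladder_step (0, false) (heads e 0 n).
have x2 : x.2 = (0 < n)%N && (e n.-1 == 1).
  by rewrite /x foldl_ladder_step_snd; case: n {IH x} => // n; rewrite heads_rcons last_rcons.
rewrite ladder_X_eq -x2 /ladder_step; case: (e n == 1); rewrite /= ?intrD ?intrB //.
by case: x.2.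
Qed.

Lemma ladder_S_neq0P :
  (forall n, (0 < n)%N -> ladder_S 2 2 e n != 0) <->
  (forall N, all (fun y => y.1 != 0) (scanl ladder_step (0, false) (heads e 0 N))).
Proof.
split=> [avoid | /all_scanl_headsP avoid n n_gt0].
  by apply/all_scanl_headsP => n n_gt0; rewrite -(intr_eq0 R) -ladder_S_heads avoid.
by rewrite ladder_S_heads intr_eq0 avoid.
Qed.

End LadderIncrements.

Lemma sqrt2B1_gt0 (R : rcfType) : 0 < Num.sqrt 2 - 1 :> R.
Proof. by rewrite subr_gt0 -[X in X < _]sqrtr1 ltr_sqrt ?ltr0n ?ltr1n. Qed.

Lemma sqrt2B1_quad (R : rcfType) : (Num.sqrt 2 - 1) ^+ 2 + 2 * (Num.sqrt 2 - 1) = 1 :> R.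
Proof. by rewrite sqrrB1 sqr_sqrtr ?ler0n //; ring. Qed.

Unset Implicit Arguments. Set Strict Implicit.

Theorem theorem4p4 (R : realType) (d : measure_display) (T : measurableType d)
  (P : probability T R) (xi : nat -> T -> R) :
  (forall i, measurable_fun setT (xi i)) ->
  mutually_independent P xi ->
  (forall i t, xi i t = 1 \/ xi i t = -1) ->
  (forall i, P [set t | xi i t = 1] = (Num.sqrt 2 - 1)%:E) ->
  P [set t | forall n : nat, (0 < n)%N ->
               ladder_S 2 2 (fun j => xi j t) n != 0] = 0%E.
Proof.
move=> xi_meas xi_indep xi_pm1 xi_p.
pose avoid0 (s : seq bool) := all (fun y => y.1 != 0) (scanl ladder_step (0, false) s).
have -> : [set t | forall n, (0 < n)%N -> ladder_S 2 2 (xi^~ t) n != 0] =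
    \bigcap_N [set t | avoid0 (heads (xi^~ t) 0 N)].
  apply/seteqP; split => t /=.
    by move=> /(ladder_S_neq0P (xi_pm1^~ t)) avoid N _; apply: avoid.
  by move=> avoid; apply/(ladder_S_neq0P (xi_pm1^~ t)) => N; apply: avoid.
apply/eqP; rewrite eq_le measure_ge0 andbT; apply/lee_addgt0Pr => e e_gt0.
have [N avoid_le] := ladder_avoid0_vanish (sqrt2B1_gt0 R) (sqrt2B1_quad R) e_gt0.
have measurable_avoid0 n : measurable [set t | avoid0 (heads (xi^~ t) 0 n)].
  exact: measurable_heads.
rewrite add0e; apply: (@le_trans _ _ (P [set t | avoid0 (heads (xi^~ t) 0 N)])).
  exact: le_measure (mem_set (bigcapT_measurable measurable_avoid0))
    (mem_set (measurable_avoid0 N)) (bigcap_inf (i := N) I).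
by rewrite (prob_heads xi_meas xi_indep xi_p) lee_fin.
Qed.
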